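(* Let $X=\{x_j:j\in J\}\subset\mathbb{R}^2$ be a finite set of $n\geq 2$ distinct points, let $s^*$ be its quadratic min-power centre and $M$ its centroid, and let $k=\big|\arg\max_{j\in J}\|s^*-x_j\|\big|$ be the number of points of $X$ at maximum distance from $s^*$. Then $$\rho(X):=\frac{P(M)}{P(s^* )}\leq \frac{1}{k+1}\left(\frac{n+1}{n}\right)^2+\frac{k}{k+1}.$$
   Context: For $s\in\mathbb{R}^2$, $P(s)=\sum_{i\in J}\|s-x_i\|^2+\max_{i\in J}\|s-x_i\|^2$ (Euclidean norm); the min-power centre $s^*$ is the unique minimiser of $P$; $M=\frac1n\sum_{i\in J}x_i$. *)

From HB Require Import structures.
From mathcomp Require Import all_boot all_order all_algebra.
From mathcomp Require Import reals.
Set Implicit Arguments. Unset Strict Implicit. Unset Printing Implicit Defensive.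
Import Order.TTheory GRing.Theory Num.Theory.
Local Open Scope ring_scope.

Definition sqdist (R : realType) (p q : R * R) : R :=
  (p.1 - q.1) ^+ 2 + (p.2 - q.2) ^+ 2.

(* maximal squared distance from s to the points x_j, j in 'I_n
   (all terms are >= 0, so 0 is a neutral start value) *)
Definition maxsq (R : realType) (n : nat) (x : 'I_n -> R * R) (s : R * R) : R :=
  \big[Num.max/0]_(j < n) sqdist s (x j).

Definition Pcost (R : realType) (n : nat) (x : 'I_n -> R * R) (s : R * R) : R :=
  \sum_(j < n) sqdist s (x j) + maxsq x s.

Definition centroid (R : realType) (n : nat) (x : 'I_n -> R * R) : R * R :=
  ((\sum_(j < n) (x j).1) / n%:R, (\sum_(j < n) (x j).2) / n%:R).

Definition nfar (R : realType) (n : nat) (x : 'I_n -> R * R) (s : R * R) : nat :=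
  #|[set j : 'I_n | sqdist s (x j) == maxsq x s]|.

From HB Require Import structures.
From mathcomp Require Import all_boot all_order all_algebra.
From mathcomp Require Import reals.
From mathcomp Require Import ring lra.
Set Implicit Arguments. Unset Strict Implicit. Unset Printing Implicit Defensive.
Import Order.TTheory GRing.Theory Num.Theory.
Local Open Scope ring_scope.

(* Let r be the largest distance from the min-power centre s to X and d = |M - s|.
   Expanding P along the segment from s towards M (parallel axis theorem for the
   sum, triangle inequality for the max term) shows that optimality of s forces
   n d <= r, and that P(M) <= T + ((n+1)/n)^2 r^2, where T = sum_j |s - x_j|^2,
   whereas P(s) = T + r^2 and T >= k r^2.  The ratio (T + c r^2)/(T + r^2),
   c >= 1, decreases in T, so T = k r^2 is the worst case. *)

Definition dist (R : realType) (p q : R * R) : R := Num.sqrt (sqdist p q).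

Definition lerp (R : realType) (s q : R * R) (t : R) : R * R :=
  (s.1 + t * (q.1 - s.1), s.2 + t * (q.2 - s.2)).

Lemma cauchy_schwarz2 (R : rcfType) (u1 u2 v1 v2 : R) :
  u1 * v1 + u2 * v2 <= Num.sqrt (u1 ^+ 2 + u2 ^+ 2) * Num.sqrt (v1 ^+ 2 + v2 ^+ 2).
Proof.
have u0 : 0 <= u1 ^+ 2 + u2 ^+ 2 by rewrite addr_ge0 ?sqr_ge0.
have v0 : 0 <= v1 ^+ 2 + v2 ^+ 2 by rewrite addr_ge0 ?sqr_ge0.
have lagrange : (u1 * v1 + u2 * v2) ^+ 2
    = (u1 ^+ 2 + u2 ^+ 2) * (v1 ^+ 2 + v2 ^+ 2) - (u1 * v2 - u2 * v1) ^+ 2 by ring.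
have := sqr_ge0 (u1 * v2 - u2 * v1).
have := mulr_ge0 (sqrtr_ge0 (u1 ^+ 2 + u2 ^+ 2)) (sqrtr_ge0 (v1 ^+ 2 + v2 ^+ 2)).
have : (Num.sqrt (u1 ^+ 2 + u2 ^+ 2) * Num.sqrt (v1 ^+ 2 + v2 ^+ 2)) ^+ 2
    = (u1 ^+ 2 + u2 ^+ 2) * (v1 ^+ 2 + v2 ^+ 2) by rewrite exprMn !sqr_sqrtr.
nra.
Qed.

Lemma sqdist_ge0 (R : realType) (p q : R * R) : 0 <= sqdist p q.
Proof. by rewrite addr_ge0 ?sqr_ge0. Qed.

Lemma dist_ge0 (R : realType) (p q : R * R) : 0 <= dist p q.
Proof. exact: sqrtr_ge0. Qed.

Lemma sqr_dist (R : realType) (p q : R * R) : dist p q ^+ 2 = sqdist p q.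
Proof. by rewrite sqr_sqrtr ?sqdist_ge0. Qed.

Lemma dist_triangle (R : realType) (a b c : R * R) :
  dist a c <= dist a b + dist b c.
Proof.
suff sq_le : sqdist a c <= (dist a b + dist b c) ^+ 2.
  by rewrite -[leRHS]ger0_norm ?addr_ge0 ?dist_ge0 // -sqrtr_sqr; exact: ler_wsqrtr.
have := cauchy_schwarz2 (a.1 - b.1) (a.2 - b.2) (b.1 - c.1) (b.2 - c.2).
rewrite [(dist a b + _) ^+ 2]sqrrD !sqr_dist /dist /sqdist.
have -> : (a.1 - c.1) ^+ 2 + (a.2 - c.2) ^+ 2
    = ((a.1 - b.1) ^+ 2 + (a.2 - b.2) ^+ 2) + ((b.1 - c.1) ^+ 2 + (b.2 - c.2) ^+ 2)
      + 2 * ((a.1 - b.1) * (b.1 - c.1) + (a.2 - b.2) * (b.2 - c.2)) by ring.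
lra.
Qed.

Lemma dist_lerp (R : realType) (s q : R * R) (t : R) :
  0 <= t -> dist (lerp s q t) s = t * dist s q.
Proof.
move=> t0; rewrite /dist -[t in RHS]ger0_norm // -sqrtr_sqr -sqrtrM ?sqr_ge0 //.
by congr Num.sqrt; rewrite /sqdist /=; ring.
Qed.

Lemma sqdist_lerp_end (R : realType) (s q : R * R) (t : R) :
  sqdist (lerp s q t) q = (1 - t) ^+ 2 * sqdist s q.
Proof. by rewrite /sqdist /=; ring. Qed.

Lemma lerp1 (R : realType) (s q : R * R) : lerp s q 1 = q.
Proof. by rewrite /lerp !mul1r !subrKC -surjective_pairing. Qed.

Lemma ratio_le_of_ge_mul (R : realFieldType) (P T a c K : R) :
  0 <= a -> 0 <= K -> 1 <= c -> K * a <= T -> P <= T + c * a ->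
  P / (T + a) <= (c + K) / (K + 1).
Proof.
move=> a0 K0 c1 Ka_le P_le.
have [->|Ta_neq0] := eqVneq (T + a) 0.
  by rewrite invr0 mulr0 divr_ge0 //; lra.
have Ta_gt0 : 0 < T + a by rewrite lt0r Ta_neq0 /=; nra.
rewrite ler_pdivrMr // mulrAC ler_pdivlMr; last lra.
have : 0 <= (c - 1) * (T - K * a) by rewrite mulr_ge0 // subr_ge0.
nra.
Qed.

Section MinPower.

Variables (R : realType) (n : nat) (x : 'I_n -> R * R).

Lemma le_maxsq s j : sqdist s (x j) <= maxsq x s.
Proof. exact: le_bigmax. Qed.

Lemma maxsq_ge0 s : 0 <= maxsq x s.
Proof. exact: bigmax_ge_id. Qed.

Lemma maxsq_le_shift p s :
  maxsq x p <= (Num.sqrt (maxsq x s) + dist p s) ^+ 2.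
Proof.
apply: bigmax_le => [|j _]; first exact: sqr_ge0.
have far_j : dist s (x j) <= Num.sqrt (maxsq x s) by exact/ler_wsqrtr/le_maxsq.
have tri := dist_triangle p s (x j).
rewrite -sqr_dist lerXn2r ?nnegrE ?addr_ge0 ?dist_ge0 ?sqrtr_ge0 //.
lra.
Qed.

Lemma nfar_maxsq_le s : (nfar x s)%:R * maxsq x s <= \sum_(j < n) sqdist s (x j).
Proof.
rewrite (bigID (mem [set j | sqdist s (x j) == maxsq x s])) /=.
rewrite (eq_bigr (fun _ => maxsq x s)); last by move=> j; rewrite inE => /eqP.
rewrite sumr_const /nfar mulr_natl lerDl.
by apply: sumr_ge0 => j _; apply: sqdist_ge0.
Qed.

Hypothesis n_gt0 : (0 < n)%N.

Lemma sum_sqdist_centroid s :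
  \sum_(j < n) sqdist s (x j)
    = \sum_(j < n) sqdist (centroid x) (x j) + n%:R * sqdist s (centroid x).
Proof.
have n_neq0 : n%:R != 0 :> R by rewrite pnatr_eq0 -lt0n.
pose c := centroid x.
have c1 : \sum_(j < n) (x j).1 = n%:R * c.1 by rewrite /c /= mulrC divfK.
have c2 : \sum_(j < n) (x j).2 = n%:R * c.2 by rewrite /c /= mulrC divfK.
have expand p : \sum_(j < n) sqdist p (x j) = n%:R * (p.1 ^+ 2 + p.2 ^+ 2)
    - 2 * (p.1 * \sum_(j < n) (x j).1 + p.2 * \sum_(j < n) (x j).2)
    + \sum_(j < n) ((x j).1 ^+ 2 + (x j).2 ^+ 2).
  rewrite (eq_bigr (fun j => (p.1 ^+ 2 + p.2 ^+ 2)
      - 2 * (p.1 * (x j).1 + p.2 * (x j).2) + ((x j).1 ^+ 2 + (x j).2 ^+ 2)));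
    last by move=> j _; rewrite /sqdist; ring.
  rewrite big_split sumrB sumr_const card_ord -mulr_sumr big_split -!mulr_sumr /=.
  by rewrite -mulr_natl; ring.
by rewrite !expand c1 c2 /sqdist -/c; ring.
Qed.

Lemma Pcost_lerp_centroid_le s t
    (d := dist s (centroid x)) (r := Num.sqrt (maxsq x s)) : 0 <= t ->
  Pcost x (lerp s (centroid x) t)
    <= Pcost x s + t * d * (t * (n%:R + 1) * d - 2 * (n%:R * d - r)).
Proof.
move=> t0.
have max_lerp : maxsq x (lerp s (centroid x) t) <= (r + t * d) ^+ 2.
  by have := maxsq_le_shift (lerp s (centroid x) t) s; rewrite dist_lerp.
rewrite /Pcost (sum_sqdist_centroid s) (sum_sqdist_centroid (lerp _ _ _)) sqdist_lerp_end.
have dd : sqdist s (centroid x) = d ^+ 2 by rewrite sqr_dist.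
have rr : maxsq x s = r ^+ 2 by rewrite sqr_sqrtr ?maxsq_ge0.
rewrite dd rr; set S := \sum_(j < n) _.
have -> : S + n%:R * d ^+ 2 + r ^+ 2 + t * d * (t * (n%:R + 1) * d - 2 * (n%:R * d - r))
    = S + n%:R * ((1 - t) ^+ 2 * d ^+ 2) + (r + t * d) ^+ 2 by ring.
by rewrite lerD2l.
Qed.

Lemma minimizer_dist_centroid s : (forall p, Pcost x s <= Pcost x p) ->
  n%:R * dist s (centroid x) <= Num.sqrt (maxsq x s).
Proof.
move=> s_opt; set d := dist s (centroid x); set r := Num.sqrt (maxsq x s).
rewrite leNgt; apply/negP => far.
have N_gt0 : 0 < n%:R :> R by rewrite ltr0n.
have r0 : 0 <= r by exact: sqrtr_ge0.
have d_gt0 : 0 < d by rewrite lt0r dist_ge0 andbT; apply: contraTneq far => ->; lra.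
pose t := (n%:R * d - r) / ((n%:R + 1) * d).
have t_gt0 : 0 < t by rewrite divr_gt0 ?mulr_gt0 //; lra.
have t_def : t * ((n%:R + 1) * d) = n%:R * d - r by rewrite divfK // gt_eqF ?mulr_gt0 //; lra.
have := le_trans (s_opt _) (Pcost_lerp_centroid_le s (ltW t_gt0)); rewrite -/d -/r.
have gain : 0 < t * d * (n%:R * d - r).
  by apply: mulr_gt0; [exact: mulr_gt0 | rewrite subr_gt0].
have -> : t * d * (t * (n%:R + 1) * d - 2 * (n%:R * d - r))
    = - (t * d * (n%:R * d - r)).
  by rewrite -t_def; ring.
lra.
Qed.

Lemma Pcost_centroid_le s : (forall p, Pcost x s <= Pcost x p) ->
  Pcost x (centroid x)
    <= \sum_(j < n) sqdist s (x j) + (n.+1%:R / n%:R) ^+ 2 * maxsq x s.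
Proof.
move=> s_opt; have := Pcost_lerp_centroid_le s ler01; rewrite lerp1 /Pcost.
have near := minimizer_dist_centroid s_opt.
set d := dist s (centroid x) in near *; set r := Num.sqrt (maxsq x s) in near *.
have N_ge1 : 1 <= n%:R :> R by rewrite ler1n.
have rr : maxsq x s = r ^+ 2 by rewrite sqr_sqrtr ?maxsq_ge0.
pose e := r / n%:R.
have re : r = n%:R * e by rewrite /e mulrC divfK // gt_eqF; lra.
have -> : (n.+1%:R / n%:R) ^+ 2 * maxsq x s = (n%:R + 1) ^+ 2 * e ^+ 2.
  by rewrite rr re -natr1; field; rewrite gt_eqF //; lra.
rewrite rr re in near *.
have d_le_e : d <= e by rewrite -(ler_pM2l (_ : 0 < n%:R)) //; lra.
have := dist_ge0 s (centroid x); rewrite -/d => d0.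
nra.
Qed.

End MinPower.

Theorem theorem2 (R : realType) (n : nat) (x : 'I_n -> R * R) (sstar : R * R) :
  (2 <= n)%N ->
  injective x ->
  (forall s : R * R, Pcost x sstar <= Pcost x s) ->
  let k := nfar x sstar in
  Pcost x (centroid x) / Pcost x sstar <=
    (k.+1%:R)^-1 * ((n.+1)%:R / n%:R) ^+ 2 + k%:R / k.+1%:R.
Proof.
move=> n_ge2 _ s_opt; cbv zeta; set k := nfar x sstar.
have n_gt0 : (0 < n)%N by apply: leq_trans n_ge2.
have c_ge1 : 1 <= (n.+1%:R / n%:R) ^+ 2 :> R.
  by rewrite exprn_ege1 // ler_pdivlMr ?ltr0n // mul1r ler_nat.
have := ratio_le_of_ge_mul (maxsq_ge0 x sstar) (ler0n _ k) c_ge1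
  (nfar_maxsq_le x sstar) (Pcost_centroid_le n_gt0 s_opt).
have -> : (k.+1%:R)^-1 * (n.+1%:R / n%:R) ^+ 2 + k%:R / k.+1%:R
    = ((n.+1%:R / n%:R) ^+ 2 + k%:R) / (k%:R + 1) :> R.
  by rewrite -[k.+1%:R]natr1; field; rewrite natr1 !pnatr_eq0 andTb -lt0n.
by [].
Qed.
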